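(* For $k\ge1$ let $N_{2k,k}$ be the reflexive graph on vertex set $\{1,\dots,2k\}$ in which every pair of distinct vertices is adjacent except the pairs $\{1,2\},\{3,4\},\dots,\{2k-1,2k\}$. The family $\{N_{2k,k}: k=1,2,3,\dots\}$ is an antichain under the standard homomorphic image ordering, and hence also under the strong homomorphic image ordering.
   Context: Graphs here are reflexive (loop at every vertex, symmetric edge relation). A homomorphism maps edges to edges; it is strong if additionally every edge of the target between vertices of the image is the image of an edge. Standard homomorphic image ordering: $A\preceq B$ iff there is a surjective homomorphism $B\to A$; strong: iff there is a surjective strong homomorphism $B\to A$. An antichain is a set of pairwise incomparable elements. *)

From mathcomp Require Import all_boot.
Set Implicit Arguments. Unset Strict Implicit. Unset Printing Implicit Defensive.

Record rgraph := RGraph {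
  vert : finType;
  adj : rel vert;
  adj_refl : reflexive adj;
  adj_sym : symmetric adj }.

Definition is_hom (G H : rgraph) (f : vert G -> vert H) : Prop :=
  forall x y, adj x y -> adj (f x) (f y).

Definition is_strong_hom (G H : rgraph) (f : vert G -> vert H) : Prop :=
  is_hom f /\
  forall x y, adj (f x) (f y) ->
    exists x' y', [/\ f x' = f x, f y' = f y & adj x' y'].

Definition surj (A B : Type) (f : A -> B) : Prop := forall b, exists a, f a = b.

Definition hom_image_le (A B : rgraph) : Prop :=
  exists f : vert B -> vert A, surj f /\ is_hom f.
Definition strong_hom_image_le (A B : rgraph) : Prop :=
  exists f : vert B -> vert A, surj f /\ is_strong_hom f.

(* N_{2k,k}: vertices 0..2k-1 (0-indexed version of 1..2k); distinct vertices
   are adjacent unless they form a pair {2i, 2i+1}. *)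
Definition N_adj (k : nat) : rel 'I_(2 * k) :=
  fun x y => (x == y) || ((val x)./2 != (val y)./2).

Arguments N_adj : clear implicits.

Lemma N_adj_refl (k : nat) : reflexive (N_adj k).
Proof. by move=> x; rewrite /N_adj eqxx. Qed.

Lemma N_adj_sym (k : nat) : symmetric (N_adj k).
Proof. by move=> x y; rewrite /N_adj eq_sym [_./2 == _]eq_sym. Qed.

Definition N (k : nat) : rgraph := @RGraph _ (N_adj k) (@N_adj_refl k) (@N_adj_sym k).

Definition antichain (le : rgraph -> rgraph -> Prop) (F : nat -> rgraph)
  (I : nat -> Prop) : Prop :=
  forall k l, I k -> I l -> k <> l -> ~ le (F k) (F l).

(* A surjective homomorphism f : N_{2l,l} -> N_{2k,k} is injective: if
   f x = f y = a, pick z with f z = b, the unique non-neighbour of a.  Edges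
   go to edges, so z is adjacent to neither x nor y; but z has only one
   non-neighbour, hence x = y.  Thus f is a bijection and 2l = 2k.  Strong
   homomorphisms are homomorphisms, so the strong ordering follows. *)
From mathcomp Require Import all_boot.
From mathcomp Require Import zify.

Set Implicit Arguments.
Unset Strict Implicit.
Unset Printing Implicit Defensive.

Lemma surj_inj_card (T T' : finType) (f : T -> T') :
  surj f -> injective f -> #|T| = #|T'|.
Proof.
move=> f_surj f_inj; apply/eqP; rewrite eqn_leq (leq_card f f_inj) /=.
rewrite -(card_codom f_inj); apply/subset_leq_card/subsetP => b _.
by have [a <-] := f_surj b; exact: codom_f.
Qed.

Lemma surj_hom_inj (G H : rgraph) (f : vert G -> vert H) :
  (forall a : vert H, exists b, ~~ adj a b) ->
  (forall x y z : vert G, ~~ adj x z -> ~~ adj y z -> x = y) ->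
  surj f -> is_hom f -> injective f.
Proof.
move=> H_nonadj G_nonadj_uniq f_surj f_hom x y fxy.
have [b ab] := H_nonadj (f x).
have [z fz] := f_surj b; rewrite -fz in ab.
by apply: (G_nonadj_uniq x y z); apply: contra ab => /f_hom; rewrite ?fxy.
Qed.

Lemma N_nonadjE (k : nat) (x y : 'I_(2 * k)) :
  ~~ N_adj k x y = (x != y) && ((val x)./2 == (val y)./2).
Proof. by rewrite /N_adj negb_or negbK. Qed.

Lemma N_exists_nonadj (k : nat) (x : 'I_(2 * k)) : exists y, ~~ N_adj k x y.
Proof.
have y_lt : ~~ odd x + (val x)./2.*2 < 2 * k.
  by have := ltn_ord x; rewrite -divn2; case: (odd x) => /=; lia.
exists (Ordinal y_lt); rewrite N_nonadjE /= half_bit_double eqxx andbT.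
apply/negP => /eqP /(congr1 (odd \o val)) /=.
by rewrite oddD odd_double; case: (odd x).
Qed.

(* Three numbers with the same half take at most two values. *)
Lemma N_nonadj_uniq (k : nat) (x y z : 'I_(2 * k)) :
  ~~ N_adj k x z -> ~~ N_adj k y z -> x = y.
Proof.
rewrite !N_nonadjE => /andP [xz /eqP hxz] /andP [yz /eqP hyz].
by apply: val_inj; move: xz yz hxz hyz; rewrite -!val_eqE /= -!divn2; lia.
Qed.

Lemma hom_image_le_N (k l : nat) : hom_image_le (N k) (N l) -> k = l.
Proof.
move=> [f [f_surj f_hom]].
have f_inj : injective f.
  by apply: surj_hom_inj f_surj f_hom; [exact: N_exists_nonadj | exact: N_nonadj_uniq].
by have := surj_inj_card f_surj f_inj; rewrite /= !card_ord; lia.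
Qed.

Lemma strong_hom_image_le_hom (A B : rgraph) :
  strong_hom_image_le A B -> hom_image_le A B.
Proof. by move=> [f [f_surj [f_hom _]]]; exists f. Qed.

Theorem proposition3p3 :
  antichain hom_image_le N (fun k => 1 <= k) /\
  antichain strong_hom_image_le N (fun k => 1 <= k).
Proof.
split=> k l _ _ neq_kl.
  by move=> /hom_image_le_N.
by move=> /strong_hom_image_le_hom /hom_image_le_N.
Qed.
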